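(* Let $B=A^{coH}\subseteq A$ be an $H$-Hopf–Galois extension with translation map $\tau$. Then the subspace of coinvariants $$(A\otimes A)^{coH}=\{X\in A\otimes A:\ \delta^{A\otimes A}(X)=X\otimes 1_H\},$$ where $\delta^{A\otimes A}(a\otimes\tilde a)=a_{(0)}\otimes\tilde a_{(0)}\otimes a_{(1)}\tilde a_{(1)}$, coincides with $$\mathcal{C}:=\{X=\textstyle\sum a\otimes\tilde a\in A\otimes A:\ \sum a_{(0)}\otimes a_{(1)}^{\langle 1\rangle}\otimes_B a_{(1)}^{\langle 2\rangle}\tilde a=\sum a\otimes\tilde a\otimes_B 1_A \text{ in } A\otimes(A\otimes_B A)\}.$$
   Context: All algebras are unital and associative over $\mathbb{C}$; Sweedler notation with implicit summation is used. $H$ is a Hopf algebra. $A$ is a right $H$-comodule algebra with coaction $\delta^A(a)=a_{(0)}\otimes a_{(1)}$, $B=A^{coH}=\{b\in A:\delta^A(b)=b\otimes 1_H\}$. The extension is $H$-Hopf–Galois if $\chi:A\otimes_B A\to A\otimes H$, $a'\otimes_B a\mapsto a'a_{(0)}\otimes a_{(1)}$, is bijective; the translation map is $\tau(h)=\chi^{-1}(1_A\otimes h)=:h^{\langle 1\rangle}\otimes_B h^{\langle 2\rangle}$. *)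

(* Tensor products over the ground field K (and the balanced
   tensor product over the subalgebra B = A^{coH}) are encoded by formal finite
   sums  sum_i x_i (x) y_i  (sequences of pairs/triples), two formal sums being
   equal in the tensor product iff every multilinear (resp. multilinear and
   B-balanced) map into every K-vector space takes the same value on them --
   i.e. equality in the quotient defining the tensor product, expressed through
   its universal property.  Sweedler notation  delta a = a_(0) (x) a_(1)  is a
   formal sum  delta a : seq (A * H). *)
From HB Require Import structures.
From mathcomp Require Import all_boot all_algebra.
From mathcomp Require Import reals.
From mathcomp.real_closed Require Import complex.

Set Implicit Arguments.
Unset Strict Implicit.
Unset Printing Implicit Defensive.

Import GRing.Theory.
Local Open Scope ring_scope.

Section Tensors.
Variable K : fieldType.

Definition lin (V U : lmodType K) (f : V -> U) : Prop :=
  forall (a : K) (x y : V), f (a *: x + y) = a *: f x + f y.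

Definition bilin (V W U : lmodType K) (f : V -> W -> U) : Prop :=
  (forall w, lin (fun v => f v w)) /\ (forall v, lin (f v)).

Definition trilin (V W Z U : lmodType K) (f : V -> W -> Z -> U) : Prop :=
  (forall w z, lin (fun v => f v w z)) /\ (forall v z, lin (fun w => f v w z))
  /\ (forall v w, lin (f v w)).

Definition teq2 (V W : lmodType K) (s t : seq (V * W)) : Prop :=
  forall (U : lmodType K) (f : V -> W -> U), bilin f ->
    \sum_(p <- s) f p.1 p.2 = \sum_(p <- t) f p.1 p.2.

Definition teq3 (V W Z : lmodType K) (s t : seq (V * W * Z)) : Prop :=
  forall (U : lmodType K) (f : V -> W -> Z -> U), trilin f ->
    \sum_(p <- s) f p.1.1 p.1.2 p.2 = \sum_(p <- t) f p.1.1 p.1.2 p.2.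

Definition tscale (V W : lmodType K) (a : K) (s : seq (V * W)) : seq (V * W) :=
  [seq (a *: p.1, p.2) | p <- s].

Definition tmul (V W : algType K) (s t : seq (V * W)) : seq (V * W) :=
  [seq (p.1 * q.1, p.2 * q.2) | p <- s, q <- t].

End Tensors.

Section Hopf.
Variable K : fieldType.

Definition is_hopf (H : algType K) (Delta : H -> seq (H * H)) (eps : H -> K)
    (S : H -> H) : Prop :=
  [/\
      (forall (a : K) (x y : H),
          teq2 (Delta (a *: x + y)) (tscale a (Delta x) ++ Delta y)),
      (forall x y : H, teq2 (Delta (x * y)) (tmul (Delta x) (Delta y))),
      teq2 (Delta 1) [:: (1, 1)] /\
      (forall h : H,
          teq3 [seq (q.1, q.2, p.2) | p <- Delta h, q <- Delta p.1]
               [seq (p.1, q.1, q.2) | p <- Delta h, q <- Delta p.2]),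
      [/\ (forall (a : K) (x y : H), eps (a *: x + y) = a * eps x + eps y),
          (forall x y : H, eps (x * y) = eps x * eps y),
          eps 1 = 1,
          (forall h : H, \sum_(p <- Delta h) eps p.1 *: p.2 = h) &
          (forall h : H, \sum_(p <- Delta h) eps p.2 *: p.1 = h)] &
      [/\ lin S,
          (forall h : H, \sum_(p <- Delta h) S p.1 * p.2 = eps h *: 1) &
          (forall h : H, \sum_(p <- Delta h) p.1 * S p.2 = eps h *: 1)]].

Definition is_comod_alg (H : algType K) (Delta : H -> seq (H * H)) (eps : H -> K)
    (A : algType K) (delta : A -> seq (A * H)) : Prop :=
  [/\ (forall (a : K) (x y : A),
          teq2 (delta (a *: x + y)) (tscale a (delta x) ++ delta y)),
      (forall x y : A, teq2 (delta (x * y)) (tmul (delta x) (delta y))),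
      teq2 (delta 1) [:: (1, 1)],
      (forall a : A,
          teq3 [seq (q.1, q.2, p.2) | p <- delta a, q <- delta p.1]
               [seq (p.1, q.1, q.2) | p <- delta a, q <- Delta p.2]) &
      (forall a : A, \sum_(p <- delta a) eps p.2 *: p.1 = a)].

Definition coinv (H A : algType K) (delta : A -> seq (A * H)) (b : A) : Prop :=
  teq2 (delta b) [:: (b, 1)].

Definition teqB (H A : algType K) (delta : A -> seq (A * H))
    (s t : seq (A * A)) : Prop :=
  forall (U : lmodType K) (f : A -> A -> U), bilin f ->
    (forall b x y, coinv delta b -> f (x * b) y = f x (b * y)) ->
    \sum_(p <- s) f p.1 p.2 = \sum_(p <- t) f p.1 p.2.

Definition teqAB (H A : algType K) (delta : A -> seq (A * H))
    (s t : seq (A * A * A)) : Prop :=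
  forall (U : lmodType K) (f : A -> A -> A -> U), trilin f ->
    (forall b a x y, coinv delta b -> f a (x * b) y = f a x (b * y)) ->
    \sum_(p <- s) f p.1.1 p.1.2 p.2 = \sum_(p <- t) f p.1.1 p.1.2 p.2.

Definition chi (H A : algType K) (delta : A -> seq (A * H))
    (s : seq (A * A)) : seq (A * H) :=
  [seq (p.1 * q.1, q.2) | p <- s, q <- delta p.2].

Definition hopf_galois (H A : algType K) (delta : A -> seq (A * H)) : Prop :=
  (forall s t : seq (A * A), teq2 (chi delta s) (chi delta t) -> teqB delta s t)
  /\ (forall y : seq (A * H), exists s : seq (A * A), teq2 (chi delta s) y).

Definition translation_map (H A : algType K) (delta : A -> seq (A * H))
    (tau : H -> seq (A * A)) : Prop :=
  forall h : H, teq2 (chi delta (tau h)) [:: (1, h)].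

Definition coact2 (H A : algType K) (delta : A -> seq (A * H))
    (X : seq (A * A)) : seq (A * A * H) :=
  flatten [seq [seq (q.1, r.1, q.2 * r.2) | q <- delta p.1, r <- delta p.2]
          | p <- X].

Definition tens1 (H A : algType K) (X : seq (A * A)) : seq (A * A * H) :=
  [seq (p.1, p.2, 1) | p <- X].

Definition inC (H A : algType K) (delta : A -> seq (A * H))
    (tau : H -> seq (A * A)) (X : seq (A * A)) : Prop :=
  teqAB delta
    (flatten [seq flatten [seq [seq (q.1, t.1, t.2 * p.2) | t <- tau q.2]
                          | q <- delta p.1]
             | p <- X])
    [seq (p.1, p.2, 1) | p <- X].

End Hopf.

(* Both conditions are images of each other under maps built from chi.
   Applying id (x) chi to the identity defining C turns
   a_(0) (x) a_(1)^<1> (x)_B a_(1)^<2> a~ into a_(0) (x) a~_(0) (x) a_(1) a~_(1)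
   (because chi (h^<1> (x)_B h^<2> a) = a_(0) (x) h a_(1)) and
   a (x) a~ (x)_B 1 into a (x) a~ (x) 1, which is coinvariance.  Conversely,
   applying id (x) (x (x) h |-> x h^<1> (x)_B h^<2>) to the coinvariance
   identity yields the identity defining C, using tau 1 = 1 (x)_B 1 and
   h^<1> (x)_B h^<2> a = a_(0) (h a_(1))^<1> (x)_B (h a_(1))^<2>; both follow
   from the injectivity of chi.  Since equality of tensors is tested against
   (balanced) multilinear maps, each of these maps is realised by
   precomposing the test map. *)
From HB Require Import structures.
From mathcomp Require Import all_boot all_algebra.
From mathcomp Require Import reals.
From mathcomp.real_closed Require Import complex.

Set Implicit Arguments.
Unset Strict Implicit.
Unset Printing Implicit Defensive.

Import GRing.Theory.
Local Open Scope ring_scope.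

Section Multilinear.
Variable K : fieldType.

Lemma lin0 (V U : lmodType K) (f : V -> U) : lin f -> f 0 = 0.
Proof.
move=> f_lin; have := f_lin 1 0 0; rewrite scaler0 addr0 scale1r => f0.
by rewrite -[LHS](addrK (f 0)) -f0 subrr.
Qed.

Lemma linZ (V U : lmodType K) (f : V -> U) : lin f -> forall a x, f (a *: x) = a *: f x.
Proof. by move=> f_lin a x; have := f_lin a x 0; rewrite (lin0 f_lin) !addr0. Qed.

Lemma lin_sum (V U : lmodType K) (I : Type) (r : seq I) (F : I -> V -> U) :
  (forall i, lin (F i)) -> lin (fun v => \sum_(i <- r) F i v).
Proof.
move=> F_lin a x y; rewrite (eq_bigr _ (fun i _ => F_lin i a x y)) big_split /=.
by rewrite scaler_sumr.
Qed.

Lemma lin_comp_mulr (A : algType K) (U : lmodType K) (f : A -> U) c :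
  lin f -> lin (fun v => f (v * c)).
Proof. by move=> f_lin a x y /=; rewrite mulrDl -scalerAl f_lin. Qed.

Lemma lin_comp_mull (A : algType K) (U : lmodType K) (f : A -> U) c :
  lin f -> lin (fun v => f (c * v)).
Proof. by move=> f_lin a x y /=; rewrite mulrDr -scalerAr f_lin. Qed.

Lemma bilin_sum (V W U : lmodType K) (I : Type) (r : seq I)
    (F : I -> V -> W -> U) :
  (forall i, bilin (F i)) -> bilin (fun v w => \sum_(i <- r) F i v w).
Proof.
by move=> F_bilin; split=> [w|v]; apply: lin_sum => i; apply (F_bilin i).
Qed.

Lemma bilin_comp_mull (A : algType K) (W U : lmodType K) (f : A -> W -> U) c :
  bilin f -> bilin (fun v w => f (c * v) w).
Proof.
case=> f_lin1 f_lin2; split=> [w|v]; last exact: f_lin2.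
exact: (lin_comp_mull (f := f^~ w)).
Qed.

Lemma bilin_comp_mulr (A B : algType K) (U : lmodType K) (f : A -> B -> U) c d :
  bilin f -> bilin (fun v w => f (v * c) (w * d)).
Proof.
case=> f_lin1 f_lin2; split=> [w|v]; first exact: (lin_comp_mulr (f := f^~ (w * d))).
exact: (lin_comp_mulr (f := f (v * c))).
Qed.

Lemma trilin_bilin (V W Z U : lmodType K) (f : V -> W -> Z -> U) v :
  trilin f -> bilin (f v).
Proof. by case=> _ []; split. Qed.

End Multilinear.

Section HopfGalois.
Variables (K : fieldType) (H A : algType K) (delta : A -> seq (A * H))
  (tau : H -> seq (A * A)).
Hypothesis delta_lin : forall (a : K) (x y : A),
  teq2 (delta (a *: x + y)) (tscale a (delta x) ++ delta y).
Hypothesis delta_mul : forall x y : A,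
  teq2 (delta (x * y)) (tmul (delta x) (delta y)).
Hypothesis delta1 : teq2 (delta 1) [:: (1, 1)].
Hypothesis tau_translation : translation_map delta tau.
Hypothesis chi_inj : forall s t : seq (A * A),
  teq2 (chi delta s) (chi delta t) -> teqB delta s t.

Definition balanced (U : lmodType K) (F : A -> A -> U) : Prop :=
  forall b x y, coinv delta b -> F (x * b) y = F x (b * y).

Lemma balanced_comp_mull (U : lmodType K) (F : A -> A -> U) c :
  balanced F -> balanced (fun x y => F (c * x) y).
Proof. by move=> F_bal b x y b_coinv; rewrite mulrA F_bal. Qed.

Lemma sum_delta_mul (U : lmodType K) (G : A -> H -> U) x y : bilin G ->
  \sum_(r <- delta (x * y)) G r.1 r.2 =
  \sum_(p <- delta x) \sum_(q <- delta y) G (p.1 * q.1) (p.2 * q.2).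
Proof.
move=> G_bilin; rewrite (delta_mul x y G_bilin) /tmul big_flatten big_map /=.
by apply: eq_bigr => p _; rewrite big_map.
Qed.

Lemma sum_delta_coinv_mul (U : lmodType K) (G : A -> H -> U) b y :
  bilin G -> coinv delta b ->
  \sum_(r <- delta (b * y)) G r.1 r.2 = \sum_(r <- delta y) G (b * r.1) r.2.
Proof.
move=> G_bilin b_coinv; rewrite sum_delta_mul //.
rewrite (b_coinv _ (fun u k => \sum_(q <- delta y) G (u * q.1) (k * q.2))).
  by rewrite big_seq1; apply: eq_bigr => r _; rewrite mul1r.
by apply: bilin_sum => q; apply: bilin_comp_mulr.
Qed.

Lemma sum_chi (U : lmodType K) (G : A -> H -> U) s :
  \sum_(p <- chi delta s) G p.1 p.2 =
  \sum_(p <- s) \sum_(q <- delta p.2) G (p.1 * q.1) q.2.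
Proof.
by rewrite /chi big_flatten big_map; apply: eq_bigr => p _; rewrite big_map.
Qed.

Lemma chi_sum_inj s t :
  (forall (U : lmodType K) (G : A -> H -> U), bilin G ->
     \sum_(p <- s) \sum_(q <- delta p.2) G (p.1 * q.1) q.2 =
     \sum_(p <- t) \sum_(q <- delta p.2) G (p.1 * q.1) q.2) ->
  forall (U : lmodType K) (F : A -> A -> U), bilin F -> balanced F ->
    \sum_(p <- s) F p.1 p.2 = \sum_(p <- t) F p.1 p.2.
Proof. by move=> chi_eq; apply: chi_inj => U G G_bilin; rewrite !sum_chi chi_eq. Qed.

Lemma sum_chi_tau (U : lmodType K) (G : A -> H -> U) h : bilin G ->
  \sum_(t <- tau h) \sum_(q <- delta t.2) G (t.1 * q.1) q.2 = G 1 h.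
Proof. by move=> G_bilin; have := tau_translation h G_bilin; rewrite sum_chi big_seq1. Qed.

Lemma sum_chi_tau_mulr (U : lmodType K) (G : A -> H -> U) h a : bilin G ->
  \sum_(t <- tau h) \sum_(q <- delta (t.2 * a)) G (t.1 * q.1) q.2 =
  \sum_(r <- delta a) G r.1 (h * r.2).
Proof.
move=> G_bilin.
transitivity (\sum_(t <- tau h) \sum_(u <- delta t.2) \sum_(r <- delta a)
   G (t.1 * u.1 * r.1) (u.2 * r.2)).
  apply: eq_bigr => t _.
  rewrite (sum_delta_mul (G := fun v k => G (t.1 * v) k)); last exact: bilin_comp_mull.
  by apply: eq_bigr => u _; apply: eq_bigr => r _; rewrite mulrA.
under eq_bigr do rewrite exchange_big.
rewrite exchange_big /=; apply: eq_bigr => r _.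
by rewrite (sum_chi_tau (G := fun v k => G (v * r.1) (k * r.2))) ?mul1r //;
  apply: bilin_comp_mulr.
Qed.

Lemma sum_tau1 (U : lmodType K) (F : A -> A -> U) : bilin F -> balanced F ->
  \sum_(t <- tau 1) F t.1 t.2 = F 1 1.
Proof.
move=> F_bilin F_bal.
rewrite (@chi_sum_inj (tau 1) [:: (1, 1)] _ U F) ?big_seq1 // => U' G G_bilin.
rewrite sum_chi_tau // big_seq1 /=.
have := delta1 (bilin_comp_mull 1 G_bilin).
by rewrite !big_seq1 /= mulr1 => <-; under eq_bigr do rewrite mul1r.
Qed.

Lemma sum_tau_lin (U : lmodType K) (F : A -> A -> U) : bilin F -> balanced F ->
  forall (a : K) h h',
  \sum_(t <- tau (a *: h + h')) F t.1 t.2 =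
  a *: \sum_(t <- tau h) F t.1 t.2 + \sum_(t <- tau h') F t.1 t.2.
Proof.
move=> F_bilin F_bal a h h'; have [F_lin1 _] := F_bilin.
rewrite (@chi_sum_inj _ (tscale a (tau h) ++ tau h') _ U F) //.
  rewrite big_cat big_map /= scaler_sumr; congr (_ + _).
  by apply: eq_bigr => t _; rewrite (linZ (F_lin1 _)).
move=> U' G G_bilin; have [G_lin1 G_lin2] := G_bilin.
rewrite sum_chi_tau // G_lin2 -(sum_chi_tau h G_bilin) -(sum_chi_tau h' G_bilin).
rewrite big_cat big_map /= scaler_sumr; congr (_ + _); apply: eq_bigr => t _.
by rewrite scaler_sumr; apply: eq_bigr => q _; rewrite -scalerAl (linZ (G_lin1 _)).
Qed.

Lemma sum_tau_mulr (U : lmodType K) (F : A -> A -> U) h a :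
  bilin F -> balanced F ->
  \sum_(t <- tau h) F t.1 (t.2 * a) =
  \sum_(r <- delta a) \sum_(t <- tau (h * r.2)) F (r.1 * t.1) t.2.
Proof.
move=> F_bilin F_bal.
pose s := [seq (t.1, t.2 * a) | t <- tau h].
pose s' := flatten [seq [seq (r.1 * t.1, t.2) | t <- tau (h * r.2)] | r <- delta a].
have := @chi_sum_inj s s' _ U F F_bilin F_bal.
rewrite /s /s' big_map big_flatten big_map /= => ->; last first.
  move=> U' G G_bilin; rewrite big_map /= sum_chi_tau_mulr //.
  rewrite big_flatten big_map /=; apply: eq_bigr => r _; rewrite big_map /=.
  rewrite -{1}[r.1]mulr1 -(sum_chi_tau (G := fun v k => G (r.1 * v) k));
    last exact: bilin_comp_mull.
  by apply: eq_bigr => t _; apply: eq_bigr => q _; rewrite mulrA.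
by apply: eq_bigr => r _; rewrite big_map.
Qed.

Definition inC_lhs (X : seq (A * A)) : seq (A * A * A) :=
  flatten [seq flatten [seq [seq (q.1, t.1, t.2 * p.2) | t <- tau q.2]
                       | q <- delta p.1]
          | p <- X].

Lemma sum_inC_lhs (U : lmodType K) (f : A -> A -> A -> U) X :
  \sum_(p <- inC_lhs X) f p.1.1 p.1.2 p.2 =
  \sum_(p <- X) \sum_(q <- delta p.1) \sum_(t <- tau q.2) f q.1 t.1 (t.2 * p.2).
Proof.
rewrite big_flatten big_map; apply: eq_bigr => p _.
by rewrite big_flatten big_map; apply: eq_bigr => q _; rewrite big_map.
Qed.

Lemma sum_coact2 (U : lmodType K) (g : A -> A -> H -> U) X :
  \sum_(p <- coact2 delta X) g p.1.1 p.1.2 p.2 =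
  \sum_(p <- X) \sum_(q <- delta p.1) \sum_(r <- delta p.2) g q.1 r.1 (q.2 * r.2).
Proof.
rewrite /coact2 big_flatten big_map; apply: eq_bigr => p _.
by rewrite big_flatten big_map; apply: eq_bigr => q _; rewrite big_map.
Qed.

Lemma inC_coinv X : inC delta tau X -> teq3 (coact2 delta X) (tens1 H X).
Proof.
move=> X_inC U g g_trilin; have [g_lin1 [g_lin2 _]] := g_trilin.
have g_bilin v w : bilin (fun u k => g v (w * u) k).
  exact/bilin_comp_mull/trilin_bilin.
(* f = g \o (id (x) chi) *)
pose f a x y := \sum_(r <- delta y) g a (x * r.1) r.2.
have f_trilin : trilin f.
  split; [|split] => [w z|v z|v w]; first by apply: lin_sum => r; apply: g_lin1.
    by apply: lin_sum => r; apply: (lin_comp_mulr (f := g v ^~ r.2)).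
  move=> a x y; rewrite /f (delta_lin a x y (g_bilin v w)) big_cat big_map /=.
  rewrite scaler_sumr; congr (_ + _).
  by apply: eq_bigr => r _; rewrite -scalerAr (linZ (g_lin2 _ _)).
have f_bal b a x y : coinv delta b -> f a (x * b) y = f a x (b * y).
  move=> b_coinv; rewrite /f (sum_delta_coinv_mul (G := fun u k => g a (x * u) k)) //.
  by apply: eq_bigr => r _; rewrite mulrA.
have := X_inC U f f_trilin f_bal; rewrite sum_inC_lhs sum_coact2 /tens1 big_map => X_eq.
transitivity (\sum_(p <- X) \sum_(q <- delta p.1) \sum_(t <- tau q.2)
                f q.1 t.1 (t.2 * p.2)).
  apply: eq_bigr => p _; apply: eq_bigr => q _.
  by rewrite (sum_chi_tau_mulr (G := g q.1)) //; apply: trilin_bilin.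
rewrite X_eq big_map; apply: eq_bigr => p _.
by rewrite /f (delta1 (g_bilin p.1 p.2)) big_seq1 /= mulr1.
Qed.

Lemma coinv_inC X : teq3 (coact2 delta X) (tens1 H X) -> inC delta tau X.
Proof.
move=> X_coinv U f f_trilin f_bal; have [f_lin1 [f_lin2 _]] := f_trilin.
have f_bilin v w : bilin (fun u k => f v (w * u) k).
  exact/bilin_comp_mull/trilin_bilin.
have f_balanced v : balanced (f v) by move=> b x y; apply: f_bal.
(* g = f \o (id (x) (x (x) h |-> x h^<1> (x)_B h^<2>)) *)
pose g a x h := \sum_(t <- tau h) f a (x * t.1) t.2.
have g_trilin : trilin g.
  split; [|split] => [w z|v z|v w]; first by apply: lin_sum => t; apply: f_lin1.
    by apply: lin_sum => t; apply: (lin_comp_mulr (f := f v ^~ t.2)).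
  exact: (sum_tau_lin (f_bilin v w) (balanced_comp_mull w (f_balanced v))).
have := X_coinv U g g_trilin; rewrite sum_coact2 /tens1 big_map => X_eq.
rewrite sum_inC_lhs.
transitivity (\sum_(p <- X) \sum_(q <- delta p.1) \sum_(r <- delta p.2)
                g q.1 r.1 (q.2 * r.2)).
  apply: eq_bigr => p _; apply: eq_bigr => q _.
  by rewrite (sum_tau_mulr _ _ (trilin_bilin q.1 f_trilin) (f_balanced q.1)).
rewrite X_eq big_map; apply: eq_bigr => p _.
by rewrite /g (sum_tau1 (f_bilin _ _) (balanced_comp_mull _ (f_balanced _))) mulr1.
Qed.

Lemma coinv_iff_inC X : teq3 (coact2 delta X) (tens1 H X) <-> inC delta tau X.
Proof. by split; [apply: coinv_inC | apply: inC_coinv]. Qed.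

End HopfGalois.

Theorem lemma3p1 (R : realType)
    (H : algType R[i]) (Delta : H -> seq (H * H)) (eps : H -> R[i]) (S : H -> H)
    (A : algType R[i]) (delta : A -> seq (A * H)) (tau : H -> seq (A * A)) :
  is_hopf Delta eps S ->
  is_comod_alg Delta eps delta ->
  hopf_galois delta ->
  translation_map delta tau ->
  forall X : seq (A * A),
    teq3 (coact2 delta X) (tens1 H X) <-> inC delta tau X.
Proof.
move=> _ [delta_lin delta_mul delta1 _ _] [chi_inj _] tau_translation X.
exact: coinv_iff_inC.
Qed.
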